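(* Let $p$ be a prime, let $A=\mathbb Z_{(p)}[a_1,\dots,a_p]$ and $\Gamma=A[r]$, with the Hopf algebroid structure described in the context. Then there are invariant classes $c_i\in A$, $2\le i\le p$, with $c_i$ of degree $2i(p-1)$, such that \[ H^*(A\otimes\mathbb Q,\Gamma\otimes\mathbb Q)=H^0(A\otimes\mathbb Q,\Gamma\otimes\mathbb Q)=\mathbb Q[c_2,\dots,c_p], \] i.e. the rational cohomology is concentrated in cohomological degree $0$ and is a polynomial algebra on $c_2,\dots,c_p$.
   Context: $(A,\Gamma)$ is the graded Hopf algebroid with $A=\mathbb Z_{(p)}[a_1,\dots,a_p]$, $|a_i|=2i(p-1)$, $\Gamma=A[r]$, $|r|=2(p-1)$. The left unit is the inclusion $A\to\Gamma$; the right unit is $\eta_R(a_i)=\sum_{j=0}^i\binom{p-j}{i-j}a_jr^{i-j}$ (with $a_0=1$), and $r$ is primitive: $\Delta(r)=r\otimes1+1\otimes r$. (Geometrically, this corepresents curves $y^{p-1}=x^p+a_1x^{p-1}+\dots+a_p$ with coordinate changes $x\mapsto x+r$.) $H^*(A,\Gamma)$ denotes the cohomology of the cobar complex, i.e. $\operatorname{Ext}_{\Gamma}(A,A)$; an element $x\in A$ is invariant if $\eta_R(x)=x$, and $H^0$ is the ring of invariants. The coefficient ring is the $p$-local integers. *)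

From HB Require Import structures.
From mathcomp Require Import all_boot all_order all_algebra.
From mathcomp Require Export mpoly.
Unset Printing Implicit Defensive.
Import Order.TTheory GRing.Theory Num.Theory.
Local Open Scope ring_scope.

(* Rationalized Hopf algebroid: A (x) Q = Q[a_1..a_p] = {mpoly rat[p]}, variable
   index j (0 <= j < p) stands for a_{j+1}.  The n-th cobar term
   Gamma^{(x)_A n} (x) Q is identified with Q[a_1..a_p, r_1..r_n] = {mpoly rat[p+n]},
   variable index p+k-1 standing for r_k (the r of the k-th tensor slot). *)

(* the variable with nat index k in {mpoly rat[m]} (0 if out of range) *)
Definition var (m k : nat) : {mpoly rat[m]} :=
  oapp (fun i : 'I_m => 'X_i) 0 (insub k).

Definition aX (m j : nat) : {mpoly rat[m]} := if j == 0%N then 1 else var m j.-1.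

Definition etaR (p m i : nat) (r : {mpoly rat[m]}) : {mpoly rat[m]} :=
  \sum_(j < i.+1) ('C(p - j, i - j))%:R * aX m j * r ^+ (i - j).

Definition etaR_hom (p : nat) (x : {mpoly rat[p]}) : {mpoly rat[p.+1]} :=
  x \mPo [tuple etaR p p.+1 (val i).+1 (var p.+1 p) | i < p].
Definition etaL_hom (p : nat) (x : {mpoly rat[p]}) : {mpoly rat[p.+1]} :=
  x \mPo [tuple var p.+1 (val i) | i < p].

Definition is_invariant (p : nat) (x : {mpoly rat[p]}) : Prop := etaR_hom p x = etaL_hom p x.

(* coface maps d^k : Gamma^{(x)n} -> Gamma^{(x)(n+1)}, 0 <= k <= n+1:
   d^0 (g) = 1 | g ;  d^k = Delta on slot k (r_k |-> r_k + r_{k+1}) ;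
   d^{n+1} (g) = g | 1 *)
Definition face_subst (p n k j : nat) : {mpoly rat[p + n.+1]} :=
  if k == 0%N then
    (if (j < p)%N then etaR p (p + n.+1) j.+1 (var _ p) else var _ j.+1)
  else if (j < p + k - 1)%N then var _ j
  else if j == (p + k - 1)%N then var _ j + var _ j.+1
  else var _ j.+1.

Definition face (p n k : nat) (f : {mpoly rat[p + n]}) : {mpoly rat[p + n.+1]} :=
  f \mPo [tuple face_subst p n k (val j) | j < p + n].

Definition cobar_d (p n : nat) (f : {mpoly rat[p + n]}) : {mpoly rat[p + n.+1]} :=
  \sum_(k < n.+2) (-1) ^+ k * face p n k f.

Definition plocal (p : nat) (q : rat) : bool := ~~ (p %| absz (denq q))%N.

Definition wdeg (p : nat) (m : 'X_{1..p}) : nat :=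
  (\sum_(j < p) 2 * (val j).+1 * (p - 1) * m j)%N.

From HB Require Import structures.
From mathcomp Require Import all_boot all_order all_algebra.
From mathcomp Require Import mpoly.
From mathcomp Require Import ring zify.
Import GRing.Theory.
Local Open Scope ring_scope.

(* Over Q, the change of variable x |-> x - a_1/p turns the curve polynomial
   x^p + a_1 x^(p-1) + ... + a_p into a depressed one, x^p + a'_2 x^(p-2) + ... + a'_p.
   Every translate of a polynomial has the same depressed form, so the a'_i are
   invariant, and c_i = p^i a'_i is p-integral.  Substituting a_j |-> a'_j sends a_1
   to 0 and fixes every invariant, which makes the invariants exactly the polynomials
   in c_2, ..., c_p, algebraically independent since they are variables up to units.
   In other words A (x) Q = Q[c_2, ..., c_p][a_1] with r acting by a_1 |-> a_1 + p r,
   so the substitution a_j |-> a'_j, r_1 |-> a_1/p, r_(k+1) |-> r_k is a contracting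
   homotopy of the cobar complex in positive degrees. *)

(** * Translating the roots of a polynomial *)

Lemma bin_trinomial n a b :
  ('C(n, a) * 'C(n - a, b) = 'C(n, a + b) * 'C(a + b, a))%N.
Proof.
have [le_abn|lt_nab] := leqP (a + b) n; last first.
  rewrite (bin_small lt_nab) mul0n.
  have [le_an|lt_na] := leqP a n; last by rewrite (bin_small lt_na).
  by rewrite (@bin_small (n - a)) ?muln0 //; lia.
apply/eqP; rewrite -(eqn_pmul2r (fact_gt0 (n - a - b))).
rewrite -(eqn_pmul2r (fact_gt0 a)) -(eqn_pmul2r (fact_gt0 b)); apply/eqP.
have fn := @bin_fact n a ltac:(lia).
have fna := @bin_fact (n - a) b ltac:(lia).
have fnab := @bin_fact n (a + b) le_abn.
have fab := @bin_fact (a + b) a ltac:(lia).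
rewrite (_ : a + b - a = b)%N in fab; last by lia.
rewrite (_ : n - (a + b) = n - a - b)%N in fnab; last by lia.
rewrite -fab in fnab.
transitivity ('C(n, a) * (a`! * ('C(n - a, b) * (b`! * (n - a - b)`!))))%N.
  by ring.
by rewrite fna fn -fnab; ring.
Qed.

Section Translation.
Variables (p : nat) (R : comPzRingType).
Implicit Types (a b : nat -> R) (r s : R).

(* [translate a r i] is the coefficient of x^(p - i) in f(x + r), where
   f(x) = \sum_j a_j x^(p - j). *)
Definition translate a r i : R :=
  \sum_(j < i.+1) ('C(p - j, i - j))%:R * a j * r ^+ (i - j).

(* After exchanging the sums, the coefficient of a_k collapses by the binomial
   expansion of (r + s)^(i - k) and [bin_trinomial]. *)
Lemma translateD a r s i : translate (translate a r) s i = translate a (r + s) i.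
Proof.
rewrite /translate.
transitivity (\sum_(j < i.+1) \sum_(k < i.+1 | (k < j.+1)%N)
   ('C(p - j, i - j))%:R * ('C(p - k, j - k))%:R * a k * r ^+ (j - k) * s ^+ (i - j)).
  apply: eq_bigr => j _.
  rewrite (big_ord_widen i.+1 (fun k => ('C(p - k, j - k))%:R * a k * r ^+ (j - k))) //.
  by rewrite mulr_sumr mulr_suml; apply: eq_bigr => k _; ring.
rewrite (exchange_big_dep xpredT) //; apply: eq_bigr => k _.
rewrite addrC exprDn mulr_sumr.
transitivity (\sum_(0 <= j < i.+1 | (k < j.+1)%N)
   ('C(p - j, i - j))%:R * ('C(p - k, j - k))%:R * a k * r ^+ (j - k) * s ^+ (i - j)).
  by rewrite big_mkord; apply: eq_bigl.
rewrite -(big_mkord xpredT (fun l => 'C(p - k, i - k)%:R * a k *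
                                     (s ^+ (i - k - l) * r ^+ l *+ 'C(i - k, l)))).
rewrite (@big_cat_nat _ _ _ k) //; last exact: ltnW.
rewrite big_nat_cond big1 ?Monoid.mul1m; last by move=> j /andP [/andP [_ ?] ?]; lia.
rewrite -{1}(add0n k) big_addn big_nat_cond [in RHS]big_nat_cond.
rewrite (_ : i.+1 - k = (i - k).+1)%N; last by have := ltn_ord k; lia.
apply: eq_big => [l|l /andP [/andP [_ lt_l] _]]; first by congr andb; lia.
rewrite (_ : p - (l + k) = p - k - l)%N; last by lia.
rewrite (_ : i - (l + k) = i - k - l)%N; last by lia.
rewrite (_ : l + k - k = l)%N; last by lia.
have := bin_trinomial (p - k) l (i - k - l).
rewrite (_ : l + (i - k - l) = i - k)%N; last by lia.
move=> /(congr1 (fun n => n%:R : R)); rewrite !natrM => bin3.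
by rewrite -mulr_natr; transitivity
  ('C(p - k, l)%:R * 'C(p - k - l, i - k - l)%:R * a k * r ^+ l * s ^+ (i - k - l));
  [ring | rewrite bin3; ring].
Qed.

Lemma translate0 a i : translate a 0 i = a i.
Proof.
rewrite /translate big_ord_recr /= subnn expr0 bin0 mulr1 mul1r big1 ?add0r //.
by move=> j _; rewrite expr0n (_ : (i - j == 0)%N = false) ?mulr0 //; have := ltn_ord j; lia.
Qed.

Lemma translate_at0 a r : translate a r 0 = a 0%N.
Proof. by rewrite /translate big_ord1 /= subn0 bin0 expr0 mul1r mulr1. Qed.

Lemma translate_at1 a r : translate a r 1 = p%:R * a 0%N * r + a 1%N.
Proof.
by rewrite /translate big_ord_recr big_ord1 /= !subn0 bin0 bin1 subnn expr0 expr1 mul1r mulr1.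
Qed.

Lemma eq_translate a b r i :
  (forall l, (l <= i)%N -> a l = b l) -> translate a r i = translate b r i.
Proof. by move=> eq_ab; apply: eq_bigr => j _; rewrite eq_ab // -ltnS. Qed.

End Translation.

Arguments translate p {R} a r i.

Lemma rmorph_translate p (R S : comPzRingType) (f : {rmorphism R -> S}) a r i :
  f (translate p a r i) = translate p (f \o a) (f r) i.
Proof.
rewrite /translate rmorph_sum; apply: eq_bigr => j _.
by rewrite !rmorphM rmorphXn rmorph_nat.
Qed.

Section Depression.
Variables (p : nat) (R : comPzRingType) (pinv : R).
Implicit Types (a b : nat -> R).

(* With [pinv] = 1/p, translating by -a_1/p kills the coefficient a_1. *)
Definition depress a i : R := translate p a (- (pinv * a 1%N)) i.

Lemma translate_depress a i : translate p (depress a) (pinv * a 1%N) i = a i.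
Proof. by rewrite /depress translateD addNr translate0. Qed.

Lemma depress_at0 a : depress a 0 = a 0%N.
Proof. exact: translate_at0. Qed.

Lemma eq_depress a b k i : (0 < k)%N -> (i <= k)%N ->
  (forall l, (l <= k)%N -> a l = b l) -> depress a i = depress b i.
Proof.
move=> k_gt0 le_ik eq_ab; rewrite /depress eq_ab //.
by apply: eq_translate => l le_li; apply: eq_ab; apply: leq_trans le_ik.
Qed.

Hypothesis pinvK : pinv * p%:R = 1.

Lemma depress_translate a r i : a 0%N = 1 -> depress (translate p a r) i = depress a i.
Proof.
move=> a0; rewrite /depress translateD translate_at1 a0; congr translate.
by rewrite mulr1 mulrDr mulrA pinvK mul1r opprD addrA subrr add0r.
Qed.

Lemma depress_at1 a : a 0%N = 1 -> depress a 1 = 0.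
Proof.
by move=> a0; rewrite /depress translate_at1 a0 mulr1 mulrN mulrA [_ * pinv]mulrC pinvK mul1r addNr.
Qed.

End Depression.

Arguments depress p {R} pinv a i.

Lemma comp_mpolyA (R : comNzRingType) n k l (f : {mpoly R[n]}) (F : 'I_n -> {mpoly R[k]})
    (u : k.-tuple {mpoly R[l]}) :
  (f \mPo [tuple F i | i < n]) \mPo u = f \mPo [tuple F i \mPo u | i < n].
Proof.
have compA_monomial : forall m : 'X_{1..n}, (f@_m *: 'X_[m] \mPo [tuple F i | i < n]) \mPo u =
                        f@_m *: 'X_[m] \mPo [tuple F i \mPo u | i < n].
  move=> m; rewrite !comp_mpolyZ !comp_mpolyX rmorph_prod; congr (_ *: _).
  by apply: eq_bigr => i _; rewrite rmorphXn !tnth_mktuple.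
rewrite [f]mpolyE (raddf_sum (comp_mpoly [tuple F i | i < n])) (raddf_sum (comp_mpoly u)).
by rewrite (raddf_sum (comp_mpoly _)); apply: eq_bigr => m _; exact: compA_monomial.
Qed.

Lemma eq_comp_mpoly (R : comNzRingType) n k (f : {mpoly R[n]}) (F G : 'I_n -> {mpoly R[k]}) :
  F =1 G -> f \mPo [tuple F j | j < n] = f \mPo [tuple G j | j < n].
Proof. by move=> eq_FG; congr comp_mpoly; apply: eq_mktuple. Qed.

Lemma varE {m k} (lt_km : (k < m)%N) : var m k = 'X_(Ordinal lt_km).
Proof. by rewrite /var insubT. Qed.

Lemma comp_var m k (F : nat -> {mpoly rat[k]}) j : (j < m)%N ->
  var m j \mPo [tuple F (val i) | i < m] = F j.
Proof.
by move=> lt_jm; rewrite (varE lt_jm) comp_mpolyXU -tnth_nth tnth_mktuple.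
Qed.

Lemma comp_aX m k (F : nat -> {mpoly rat[k]}) l : (l <= m)%N ->
  aX m l \mPo [tuple F (val i) | i < m] = if l == 0%N then 1 else F l.-1.
Proof.
rewrite /aX; case: eqP => [_ _|l_neq0 le_lm]; first exact: comp_mpoly1.
by apply: comp_var; lia.
Qed.

Lemma comp_mpoly_var_id m (f : {mpoly rat[m]}) : f \mPo [tuple var m (val j) | j < m] = f.
Proof.
rewrite -[RHS]comp_mpoly_id; congr comp_mpoly; apply: eq_mktuple => j.
by rewrite (varE (ltn_ord j)); congr (mpolyX _ _); apply: val_inj.
Qed.

Lemma mulKmpolyC m (c : rat) (f : {mpoly rat[m]}) : c != 0 -> (c^-1)%:MP * (c%:MP * f) = f.
Proof. by move=> c_neq0; rewrite mulrA -rmorphM /= mulVf // mul1r. Qed.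

Definition pinv p m : {mpoly rat[m]} := (p%:R^-1)%:MP.

Lemma pinvK p m : (0 < p)%N -> pinv p m * p%:R = 1.
Proof.
move=> p_gt0; rewrite /pinv -mpolyC_nat -rmorphM /= mulVf ?rmorph1 //.
by rewrite Num.Theory.pnatr_eq0 -lt0n.
Qed.

Definition depressed p m i : {mpoly rat[m]} := depress p (pinv p m) (aX m) i.

Lemma etaRE p m i r : etaR p m i r = translate p (aX m) r i.
Proof. by []. Qed.

Lemma comp_depressed p m k (t : m.-tuple {mpoly rat[k]}) i :
  depressed p m i \mPo t = depress p (pinv p k) (fun l => aX m l \mPo t) i.
Proof.
by rewrite /depressed /depress rmorph_translate rmorphN rmorphM /= comp_mpolyC.
Qed.

(* The substitution of the coface d^0, which is eta_R on the variables a_j. *)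
Definition translate_subst p m j : {mpoly rat[m]} :=
  if (j < p)%N then etaR p m j.+1 (var m p) else var m j.+1.

Lemma depressed_translate p m m' i : (0 < p)%N -> (p <= m)%N -> (i <= p)%N ->
  depressed p m i \mPo [tuple translate_subst p m' (val j) | j < m] = depressed p m' i.
Proof.
move=> p_gt0 le_pm le_ip; rewrite comp_depressed.
rewrite /depressed -(@depress_translate p _ _ (pinvK p m' p_gt0) (aX m') (var m' p) i erefl).
apply: (@eq_depress _ _ _ _ _ p) => // l le_lp; rewrite comp_aX; last by lia.
case: eqP => [->|l_neq0]; first by rewrite translate_at0.
by rewrite /translate_subst ifT ?prednK //; lia.
Qed.

Lemma depressed_fix p m m' (F : nat -> {mpoly rat[m']}) i :
  (0 < p)%N -> (p <= m)%N -> (i <= p)%N -> (forall j, (j < p)%N -> F j = var m' j) ->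
  depressed p m i \mPo [tuple F (val j) | j < m] = depressed p m' i.
Proof.
move=> p_gt0 le_pm le_ip FE; rewrite comp_depressed.
apply: (@eq_depress _ _ _ _ _ p) => // l le_lp; rewrite comp_aX; last by lia.
by rewrite /aX; case: eqP => // l_neq0; apply: FE; lia.
Qed.

Definition contract_subst p m j : {mpoly rat[m]} :=
  if (j < p)%N then depressed p m j.+1
  else if j == p then pinv p m * var m 0 else var m j.-1.

Lemma contract_subst_lt p m j : (j < p)%N -> contract_subst p m j = depressed p m j.+1.
Proof. by rewrite /contract_subst => ->. Qed.

Lemma contract_subst_p p m : contract_subst p m p = pinv p m * var m 0.
Proof. by rewrite /contract_subst ltnn eqxx. Qed.

Lemma contract_subst_gt p m j : (p < j)%N -> contract_subst p m j = var m j.-1.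
Proof. by move=> lt_pj; rewrite /contract_subst ifF ?ifF //; lia. Qed.

(* The arities are related by a hypothesis because [p + n.+1] is not convertible to
   [(p + n).+1]. *)
Lemma contract_translate p m m' j : (0 < p)%N -> (p <= m)%N -> (j < m)%N -> m' = m.+1 ->
  translate_subst p m' j \mPo [tuple contract_subst p m (val i) | i < m'] = var m j.
Proof.
move=> p_gt0 le_pm lt_jm ->; rewrite /translate_subst; case: ltnP => [lt_jp|le_pj].
  rewrite etaRE rmorph_translate /= comp_var // contract_subst_p.
  rewrite (@eq_translate _ _ _ (depressed p m)); first exact: translate_depress.
  move=> l le_lj /=; rewrite comp_aX; last by lia.
  case: eqP => [->|l_neq0]; first by rewrite /depressed depress_at0.
  by rewrite contract_subst_lt ?prednK //; lia.
by rewrite comp_var ?contract_subst_gt //; lia.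
Qed.

(** * A contracting homotopy of the cobar complex *)

Lemma face_subst0E p n j : face_subst p n 0 j = translate_subst p (p + n.+1) j.
Proof. by []. Qed.

Lemma face_substS_lt p n k j : (j < p + k)%N -> face_subst p n k.+1 j = var _ j.
Proof. by move=> ?; rewrite /face_subst /= ifT //; lia. Qed.

Lemma face_substS_eq p n k j : j = (p + k)%N -> face_subst p n k.+1 j = var _ j + var _ j.+1.
Proof. by move=> ->; rewrite /face_subst /= ifF ?ifT //; lia. Qed.

Lemma face_substS_gt p n k j : (p + k < j)%N -> face_subst p n k.+1 j = var _ j.+1.
Proof. by move=> lt_pkj; rewrite /face_subst /= ifF ?ifF //; lia. Qed.

Definition contract p n (f : {mpoly rat[p + n.+1]}) : {mpoly rat[p + n]} :=
  f \mPo [tuple contract_subst p (p + n) (val j) | j < p + n.+1].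

Lemma contract_face0 p n (f : {mpoly rat[p + n]}) : (0 < p)%N ->
  contract p n (face p n 0 f) = f.
Proof.
move=> p_gt0; rewrite /contract /face comp_mpolyA -[RHS]comp_mpoly_var_id.
by apply: eq_comp_mpoly => j; apply: contract_translate => //;
  [exact: leq_addr | exact: ltn_ord | exact: addnS].
Qed.

Lemma contract_face_subst_shift p m k i : (p <= i)%N -> (i < p + m)%N ->
  face_subst p m.+1 k.+1 i.+1 \mPo [tuple contract_subst p (p + m.+1) (val l) | l < p + m.+2]
  = face_subst p m k i.
Proof.
move=> le_pi lt_i; case: k => [|k].
  rewrite face_subst0E /translate_subst ifF; last by lia.
  by rewrite face_substS_gt ?comp_var ?contract_subst_gt //; lia.
case: (ltngtP i (p + k)) => [lt_ipk|lt_pki|eq_i].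
- by rewrite !face_substS_lt ?comp_var ?contract_subst_gt //; lia.
- by rewrite !face_substS_gt ?comp_var ?contract_subst_gt //; lia.
rewrite (@face_substS_eq p _ k.+1 i.+1) ?(@face_substS_eq p _ k i); try lia.
by rewrite rmorphD /= !comp_var ?contract_subst_gt //; lia.
Qed.

Lemma contract_face_subst p m k j : (0 < p)%N -> (j < p + m.+1)%N ->
  face_subst p m.+1 k.+1 j \mPo [tuple contract_subst p (p + m.+1) (val l) | l < p + m.+2]
  = contract_subst p (p + m) j \mPo [tuple face_subst p m k (val l) | l < p + m].
Proof.
move=> p_gt0 lt_j; case: (ltngtP j p) => [lt_jp|lt_pj|->].
- rewrite face_substS_lt ?comp_var ?contract_subst_lt //; try lia.
  case: k => [|k]; first by symmetry; apply: depressed_translate; lia.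
  symmetry; apply: depressed_fix => // [|l lt_lp]; first lia.
  by apply: face_substS_lt; lia.
- case: j => [//|i] in lt_j lt_pj *.
  by rewrite contract_subst_gt //= comp_var; [apply: contract_face_subst_shift|]; lia.
rewrite contract_subst_p rmorphM /= comp_mpolyC comp_var; last by lia.
case: k => [|k].
  rewrite (@face_substS_eq p _ 0 p) ?addn0 // rmorphD /= !comp_var; try lia.
  rewrite contract_subst_p contract_subst_gt // face_subst0E /translate_subst ifT //.
  by rewrite etaRE translate_at1 /= mulr1 mulrDr mulrA pinvK // mul1r addrC.
rewrite face_substS_lt ?comp_var ?contract_subst_p ?face_substS_lt //; lia.
Qed.

Lemma contract_faceS p m k (f : {mpoly rat[p + m.+1]}) : (0 < p)%N ->
  contract p m.+1 (face p m.+1 k.+1 f) = face p m k (contract p m f).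
Proof.
move=> p_gt0; rewrite /contract /face !comp_mpolyA.
by apply: eq_comp_mpoly => j; apply: contract_face_subst => //; exact: ltn_ord.
Qed.

Lemma contract_alternating_sum p n k (F : 'I_k -> {mpoly rat[p + n.+1]}) :
  contract p n (\sum_(i < k) (-1) ^+ i * F i) = \sum_(i < k) (-1) ^+ i * contract p n (F i).
Proof.
by rewrite /contract rmorph_sum; apply: eq_bigr => i _; rewrite rmorphM rmorphXn rmorphN rmorph1.
Qed.

Lemma contract_cobar_d p n (f : {mpoly rat[p + n.+1]}) : (0 < p)%N ->
  contract p n.+1 (cobar_d p n.+1 f) + cobar_d p n (contract p n f) = f.
Proof.
move=> p_gt0; rewrite /cobar_d contract_alternating_sum big_ord_recl expr0 mul1r.
rewrite contract_face0 // -addrA addrC -big_split big1 ?add0r // => k _.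
by rewrite /bump /= contract_faceS // exprS; ring.
Qed.

Lemma cobar_d_exact p n (f : {mpoly rat[p + n.+1]}) : (0 < p)%N ->
  cobar_d p n.+1 f = 0 -> exists g : {mpoly rat[p + n]}, cobar_d p n g = f.
Proof.
move=> p_gt0 df0; exists (contract p n f).
by rewrite -[RHS](contract_cobar_d p n f p_gt0) df0 /contract comp_mpoly0 add0r.
Qed.

(** * Invariants *)

Lemma etaR_homE p x : etaR_hom p x = x \mPo [tuple translate_subst p p.+1 (val j) | j < p].
Proof. by apply: eq_comp_mpoly => j; rewrite /translate_subst ltn_ord. Qed.

Lemma is_invariant_depressed p i : (0 < p)%N -> (i <= p)%N ->
  is_invariant p (depressed p p i).
Proof.
move=> p_gt0 le_ip; rewrite /is_invariant etaR_homE depressed_translate //.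
by rewrite /etaL_hom depressed_fix.
Qed.

Lemma is_invariant_comp p k (q : {mpoly rat[k]}) (F : 'I_k -> {mpoly rat[p]}) :
  (forall j, is_invariant p (F j)) -> is_invariant p (q \mPo [tuple F j | j < k]).
Proof.
move=> invF; rewrite /is_invariant /etaR_hom /etaL_hom !comp_mpolyA.
by apply: eq_comp_mpoly => j; exact: invF.
Qed.

Lemma invariant_depressedE p x : (0 < p)%N -> is_invariant p x ->
  x = x \mPo [tuple depressed p p (val j).+1 | j < p].
Proof.
move=> p_gt0 /(congr1 (comp_mpoly [tuple contract_subst p p (val j) | j < p.+1])).
rewrite etaR_homE /etaL_hom !comp_mpolyA => inv_x.
transitivity (x \mPo [tuple translate_subst p p.+1 (val j) \mPo
                      [tuple contract_subst p p (val l) | l < p.+1] | j < p]).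
  rewrite -{1}[x]comp_mpoly_var_id; apply: eq_comp_mpoly => j.
  by symmetry; apply: (@contract_translate p p p.+1 j p_gt0 (leqnn p) (ltn_ord j)).
rewrite inv_x; apply: eq_comp_mpoly => j; have lt_jp := ltn_ord j.
by rewrite comp_var ?contract_subst_lt; last exact: ltnW.
Qed.

Definition cgen p i : {mpoly rat[p]} := (p%:R ^+ i)%:MP * depressed p p i.

Lemma is_invariantC p c : is_invariant p c%:MP.
Proof. by rewrite /is_invariant /etaR_hom /etaL_hom !comp_mpolyC. Qed.

Lemma is_invariantM p x y : is_invariant p x -> is_invariant p y -> is_invariant p (x * y).
Proof.
by rewrite /is_invariant /etaR_hom /etaL_hom => inv_x inv_y; rewrite !rmorphM /= inv_x inv_y.
Qed.

Lemma is_invariant_cgen p i : (0 < p)%N -> (i <= p)%N -> is_invariant p (cgen p i).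
Proof.
move=> p_gt0 le_ip; apply: is_invariantM; first exact: is_invariantC.
exact: is_invariant_depressed.
Qed.

(* Inverse to q |-> q(c_2, ..., c_p) on invariants: a_1 |-> 0, a_j |-> y_(j-2) / p^j. *)
Definition cgen_coord p j : {mpoly rat[p.-1]} :=
  if j == 0%N then 0 else ((p%:R ^+ j.+1)^-1)%:MP * var p.-1 j.-1.

Lemma pnatrX_neq0 p e : (0 < p)%N -> (p%:R ^+ e : rat) != 0.
Proof. by move=> p_gt0; rewrite expf_neq0 // Num.Theory.pnatr_eq0 -lt0n. Qed.

Lemma cgen_coordK p j : (0 < p)%N -> (j < p)%N ->
  cgen_coord p j \mPo [tuple cgen p (val i).+2 | i < p.-1] = depressed p p j.+1.
Proof.
move=> p_gt0 lt_jp; rewrite /cgen_coord; case: eqP => [->|j_neq0].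
  by rewrite comp_mpoly0 /depressed (@depress_at1 _ _ _ (pinvK p p p_gt0)).
rewrite rmorphM /= comp_mpolyC (comp_var _ _ (fun n => cgen p n.+2)); last by lia.
by rewrite prednK; [rewrite /cgen mulKmpolyC // pnatrX_neq0 | lia].
Qed.

Lemma cgenK p i : (0 < p)%N -> (2 <= i <= p)%N ->
  cgen p i \mPo [tuple cgen_coord p (val j) | j < p] = var p.-1 i.-2.
Proof.
move=> p_gt0 /andP [le_2i le_ip].
rewrite /cgen rmorphM /= comp_mpolyC comp_depressed /depress (comp_aX _ _ _ 1) //=.
rewrite [cgen_coord p 0]/cgen_coord /= mulr0 oppr0 translate0 comp_aX // ifF; last by lia.
rewrite /cgen_coord ifF; last by lia.
rewrite prednK; last by lia.
by rewrite -{1}[_ ^+ i]invrK mulKmpolyC // invr_neq0 // pnatrX_neq0.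
Qed.

Lemma invariant_cgenE p x : (0 < p)%N -> is_invariant p x ->
  x = (x \mPo [tuple cgen_coord p (val j) | j < p]) \mPo [tuple cgen p (val j).+2 | j < p.-1].
Proof.
move=> p_gt0 inv_x; rewrite comp_mpolyA {1}(invariant_depressedE p x p_gt0 inv_x).
by apply: eq_comp_mpoly => j; rewrite cgen_coordK //; exact: ltn_ord.
Qed.

Lemma cgen_comp_inj p (q : {mpoly rat[p.-1]}) : (0 < p)%N ->
  q \mPo [tuple cgen p (val j).+2 | j < p.-1] = 0 -> q = 0.
Proof.
move=> p_gt0 /(congr1 (comp_mpoly [tuple cgen_coord p (val j) | j < p])).
rewrite comp_mpoly0 comp_mpolyA => <-; rewrite -[LHS]comp_mpoly_var_id.
by apply: eq_comp_mpoly => -[j lt_jp] /=; rewrite cgenK //; lia.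
Qed.

(** * Integrality and degrees of the generators *)

Definition monomial_of_weight p d (f : {mpoly rat[p]}) : Prop :=
  exists m, f = 'X_[m] /\ wdeg p m = d.

Lemma wdegD p m1 m2 : wdeg p (m1 + m2)%MM = (wdeg p m1 + wdeg p m2)%N.
Proof. by rewrite /wdeg -big_split; apply: eq_bigr => j _; rewrite mnmDE mulnDr. Qed.

Lemma monomial_of_weight1 p : monomial_of_weight p 0 1.
Proof.
by exists 0%MM; rewrite mpolyX0 /wdeg big1 // => j _; rewrite mnm0E muln0.
Qed.

Lemma monomial_of_weightM {p d1 d2 f g} :
  monomial_of_weight p d1 f -> monomial_of_weight p d2 g ->
  monomial_of_weight p (d1 + d2) (f * g).
Proof. by move=> [m1 [-> <-]] [m2 [-> <-]]; exists (m1 + m2)%MM; rewrite mpolyXD wdegD. Qed.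

Lemma monomial_of_weightX {p d f} e :
  monomial_of_weight p d f -> monomial_of_weight p (e * d) (f ^+ e).
Proof.
move=> fd; elim: e => [|e IHe]; first exact: monomial_of_weight1.
by rewrite exprS mulSn; apply: monomial_of_weightM.
Qed.

Lemma monomial_of_weight_aX p j : (j <= p)%N ->
  monomial_of_weight p (2 * j * (p - 1)) (aX p j).
Proof.
rewrite /aX; case: eqP => [->|j_neq0] le_jp.
  by rewrite muln0 mul0n; exact: monomial_of_weight1.
have lt_jp : (j.-1 < p)%N by lia.
exists U_(Ordinal lt_jp)%MM; split; first by rewrite (varE lt_jp).
rewrite /wdeg (bigD1 (Ordinal lt_jp)) //= mnm1E eqxx muln1 big1 ?addn0.
  by rewrite prednK //; lia.
by move=> l l_neq; rewrite mnm1E eq_sym (negbTE l_neq) muln0.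
Qed.

Definition cgen_coef p j e : int := ('C(p - j, e))%:Z * (-1) ^+ e * (p%:Z) ^+ j.

Lemma cgen_termE p j e : (0 < p)%N ->
  (p%:R ^+ (j + e))%:MP * ('C(p - j, e)%:R * aX p j * (- (pinv p p * aX p 1)) ^+ e)
  = (cgen_coef p j e)%:~R *: (aX p j * aX p 1 ^+ e).
Proof.
move=> p_gt0.
have pinvXK : ((p%:R : rat) ^+ e)%:MP * pinv p p ^+ e = 1.
  by rewrite rmorphXn rmorph_nat -exprMn mulrC pinvK // expr1n.
transitivity ((('C(p - j, e)%:R * (-1) ^+ e * p%:R ^+ j)%:MP * (aX p j * aX p 1 ^+ e)) *
              (((p%:R : rat) ^+ e)%:MP * pinv p p ^+ e)).
  by rewrite exprD !rmorphM !rmorphXn /= rmorphN rmorph1 !rmorph_nat exprNn exprMn; ring.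
rewrite pinvXK mulr1 -mul_mpolyC /cgen_coef.
by rewrite !rmorphM !rmorphXn /= rmorphN rmorph1 !pmulrn.
Qed.

Lemma cgenE p i : (0 < p)%N ->
  cgen p i = \sum_(j < i.+1) (cgen_coef p j (i - j))%:~R *: (aX p j * aX p 1 ^+ (i - j)).
Proof.
move=> p_gt0; rewrite /cgen /depressed /depress /translate mulr_sumr.
apply: eq_bigr => -[j /= lt_ji] _; rewrite -cgen_termE // subnKC //.
Qed.

Lemma mcoeff_int_comb {p n} (z : 'I_n -> int) (F : 'I_n -> {mpoly rat[p]}) m :
  (forall j, exists mj, F j = 'X_[mj]) ->
  exists c : int, (\sum_j (z j)%:~R *: F j)@_m = c%:~R.
Proof.
move=> monoF; apply: (big_ind (fun f : {mpoly rat[p]} => exists c : int, f@_m = c%:~R)).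
- by exists 0; rewrite mcoeff0.
- by move=> f g [cf ef] [cg eg]; exists (cf + cg); rewrite mcoeffD ef eg rmorphD.
move=> j _; have [mj ->] := monoF j; exists (z j * (mj == m)%:Z).
by rewrite mcoeffZ mcoeffX rmorphM; case: (mj == m).
Qed.

Lemma mcoeff_comb_weight {p n} d (c : 'I_n -> rat) (F : 'I_n -> {mpoly rat[p]}) m :
  (forall j, monomial_of_weight p d (F j)) ->
  (\sum_j c j *: F j)@_m != 0 -> wdeg p m = d.
Proof.
move=> weightF; apply: (big_ind (fun f : {mpoly rat[p]} => f@_m != 0 -> wdeg p m = d)).
- by rewrite mcoeff0 eqxx.
- by move=> f g wf wg; rewrite mcoeffD; case: (eqVneq f@_m 0) => [->|/wf //]; rewrite add0r.
move=> j _; have [mj [-> <-]] := weightF j.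
rewrite mcoeffZ mcoeffX; have [-> //|_] := eqVneq mj m.
by rewrite mulr0 eqxx.
Qed.

Lemma plocal_int p (z : int) : prime p -> plocal p z%:~R.
Proof. by move=> p_prime; rewrite /plocal denq_int dvdn1; apply: contraTneq p_prime => ->. Qed.

Lemma monomial_of_weight_cgen_term p i j : (0 < p)%N -> (j <= i)%N -> (i <= p)%N ->
  monomial_of_weight p (2 * i * (p - 1)) (aX p j * aX p 1 ^+ (i - j)).
Proof.
move=> p_gt0 le_ji le_ip.
have := monomial_of_weightM (monomial_of_weight_aX p j (leq_trans le_ji le_ip))
          (monomial_of_weightX (i - j) (monomial_of_weight_aX p 1 p_gt0)).
by congr monomial_of_weight; nia.
Qed.

Lemma plocal_cgen p i m : prime p -> (i <= p)%N -> plocal p (cgen p i)@_m.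
Proof.
move=> p_prime le_ip; have p_gt0 := prime_gt0 p_prime.
have monoF (j : 'I_i.+1) : exists mj, aX p j * aX p 1 ^+ (i - j) = 'X_[mj].
  have [mj [-> _]] := monomial_of_weight_cgen_term p i j p_gt0 (ltn_ord j) le_ip.
  by exists mj.
rewrite (cgenE p i p_gt0).
have [c ->] := mcoeff_int_comb (fun j : 'I_i.+1 => cgen_coef p j (i - j)) _ m monoF.
exact: plocal_int.
Qed.

Lemma wdeg_cgen p i m : (0 < p)%N -> (i <= p)%N ->
  (cgen p i)@_m != 0 -> wdeg p m = (2 * i * (p - 1))%N.
Proof.
move=> p_gt0 le_ip; rewrite (cgenE p i p_gt0); apply: mcoeff_comb_weight => j.
exact: monomial_of_weight_cgen_term p i j p_gt0 (ltn_ord j) le_ip.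
Qed.

Theorem mainTheorem1 (p : nat) (hp : prime p) :
  exists c : nat -> {mpoly rat[p]},
    (forall i : nat, (2 <= i <= p)%N ->
       [/\ (forall m, plocal p (c i)@_m),
           is_invariant p (c i)
         & (forall m, (c i)@_m != 0 -> wdeg p m = (2 * i * (p - 1))%N)]) /\
    (forall (n : nat) (f : {mpoly rat[p + n.+1]}),
       cobar_d p n.+1 f = 0 -> exists g : {mpoly rat[p + n]}, cobar_d p n g = f) /\
    (forall x : {mpoly rat[p]}, is_invariant p x <->
       exists q : {mpoly rat[p.-1]}, x = q \mPo [tuple c (val j).+2 | j < p.-1]) /\
    (forall q : {mpoly rat[p.-1]},
       q \mPo [tuple c (val j).+2 | j < p.-1] = 0 -> q = 0).
Proof.
have p_gt0 := prime_gt0 hp.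
exists (cgen p); split; [|split; [|split]].
- move=> i /andP [_ le_ip]; split.
  + by move=> m; apply: plocal_cgen.
  + exact: is_invariant_cgen.
  + by move=> m; apply: wdeg_cgen.
- by move=> n f; apply: cobar_d_exact.
- move=> x; split => [inv_x|[q ->]].
    by exists (x \mPo [tuple cgen_coord p (val j) | j < p]); apply: invariant_cgenE.
  by apply: is_invariant_comp => -[j lt_j]; apply: is_invariant_cgen => //=; lia.
- by move=> q; apply: cgen_comp_inj.
Qed.
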